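(* Let $n>2$ and let $\mathcal{T}(X_0)$ be a discrete generation pedigree of order $n$ and depth $d\ge 1$. Suppose there are distinct $x_i,x_j\in X_0$ having the same two parents. Then for every discrete generation pedigree $\mathcal{U}(X_0)$ such that for each $Y\subset X_0$ with $|Y|=n-1$ there is an isomorphism $\mathcal{T}(Y)\to\mathcal{U}(Y)$ fixing every vertex of $Y$, there is an isomorphism $\mathcal{T}(X_0)\to\mathcal{U}(X_0)$ fixing every vertex of $X_0$.
   Context: A (general) pedigree $\mathcal{T}(X_0)$ on a set $X_0$ is a finite directed graph on a vertex set $V$ such that: every vertex has out-degree $0$ or $2$; $X_0\subseteq V$ and every vertex of $X_0$ has in-degree $0$; there are no isolated vertices. Vertices of $X_0$ are extant; $|X_0|$ is the order. If $uv$ is an arc, $v$ is a parent of $u$. A discrete generation pedigree of depth $d$ on $X_0$ has vertex set $V=\bigcup_{i=0}^d X_i$ with the $X_i$ disjoint, $X_d$ the set of vertices of out-degree $0$, and every vertex of $X_i$ ($i<d$) having its two out-arcs to vertices of $X_{i+1}$. For $Y\subseteq X_0$, the sub-pedigree $\mathcal{T}(Y)$ is obtained by deleting every vertex having no descendant in $Y$ (a descendant of $v$ is a vertex $u$ with a directed path from $u$ to $v$, including $u=v$). Isomorphisms are arc-preserving bijections in both directions. *)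

From mathcomp Require Import all_boot.
Set Implicit Arguments. Unset Strict Implicit. Unset Printing Implicit Defensive.

(* A pedigree on the label set X (the extant set X_0 is the image of an
   injective labelling e : X -> V), with vertex set a finite type V and arc
   relation a : rel V ("a u v" means v is a parent of u). *)

Definition outdeg (V : finType) (a : rel V) (u : V) : nat := #|[set v | a u v]|.
Definition indeg (V : finType) (a : rel V) (v : V) : nat := #|[set u | a u v]|.

Definition is_pedigree (X V : finType) (a : rel V) (e : X -> V) : Prop :=
  [/\ injective e,
      (forall u, outdeg a u = 0 \/ outdeg a u = 2),
      (forall x, indeg a (e x) = 0)
    & (forall v, 0 < outdeg a v + indeg a v)].

(* Discrete generation pedigree of depth d: g v is the index i with v in X_i. *)
Definition is_dgp (X V : finType) (a : rel V) (e : X -> V) (g : V -> nat) (d : nat)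
  : Prop :=
  [/\ is_pedigree a e,
      (forall v, g v <= d),
      (forall v, g v = 0 <-> exists x, e x = v),
      (forall v, g v = d <-> outdeg a v = 0)
    & (forall u v, g u < d -> a u v -> g v = (g u).+1)].

(* Vertex set of the sub-pedigree T(Y): vertices having a descendant in Y
   (u is a descendant of v iff there is a directed path from u to v). *)
Definition subV (X V : finType) (a : rel V) (e : X -> V) (Y : {set X}) : {set V} :=
  [set v | [exists y in Y, connect a (e y) v]].

Definition iso_fixing (X VT VU : finType) (aT : rel VT) (eT : X -> VT)
  (aU : rel VU) (eU : X -> VU) (Y : {set X}) : Prop :=
  exists f : VT -> VU,
    [/\ {in subV aT eT Y &, injective f},
        f @: subV aT eT Y = subV aU eU Y,
        {in subV aT eT Y &, forall u v, aT u v = aU (f u) (f v)}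
      & forall y, y \in Y -> f (eT y) = eU y].

From mathcomp Require Import all_boot zify.
Set Implicit Arguments. Unset Strict Implicit. Unset Printing Implicit Defensive.

(* Since extant vertices have no children, T(X_0) is T(X_0 \ {x_i}) with the
   leaf x_i glued onto the parents of its sibling x_j.  Any third extant
   vertex x_k gives an isomorphism T(X_0 \ {x_k}) -> U(X_0 \ {x_k}) fixing x_i
   and x_j, so x_i and x_j are siblings in U as well, and U(X_0) is likewise
   U(X_0 \ {x_i}) with x_i glued onto the parents of x_j.  Extending the
   isomorphism on X_0 \ {x_i} by x_i |-> x_i therefore gives the result. *)

Lemma indeg0_arc (V : finType) (a : rel V) u v : indeg a v = 0 -> a u v = false.
Proof.
rewrite /indeg => /eqP; rewrite cards_eq0 => /eqP no_arc.
by apply/negbTE/negP => auv; have := in_set0 u; rewrite -no_arc inE auv.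
Qed.

Lemma connect_indeg0 (V : finType) (a : rel V) u v :
  indeg a v = 0 -> connect a u v -> u = v.
Proof.
move=> v_src /connectP [p]; case/lastP: p => [//|p z].
rewrite rcons_path last_rcons => /andP [_ a_z] z_v; subst z.
by rewrite (indeg0_arc _ v_src) in a_z.
Qed.

Lemma connect_first_step (V : finType) (a : rel V) u v :
  connect a u v -> u = v \/ exists2 w, a u w & connect a w v.
Proof.
move=> /connectP [[|w p] /= walk ->]; [by left | right].
case/andP: walk => a_uw walk; exists w => //; apply/connectP; by exists p.
Qed.

Section SubPedigree.

Variables (X V : finType) (a : rel V) (e : X -> V).

Lemma mem_subV (Y : {set X}) y v :
  y \in Y -> connect a (e y) v -> v \in subV a e Y.
Proof. by move=> yY yv; rewrite inE; apply/existsP; exists y; rewrite yY. Qed.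

Lemma arc_subV (Y : {set X}) y v : y \in Y -> a (e y) v -> v \in subV a e Y.
Proof. by move=> yY /connect1; apply: mem_subV. Qed.

Lemma subV_setT_sibling xi xj : xi != xj -> a (e xi) =1 a (e xj) ->
  subV a e setT = e xi |: subV a e [set~ xi].
Proof.
move=> xi_xj sib; apply/setP => v; rewrite in_setU1; apply/idP/idP.
- rewrite inE => /existsP [y /andP [_ yv]]; have [y_xi|y_xi] := eqVneq y xi; last first.
    by apply/orP; right; apply: (mem_subV (y := y)); rewrite ?inE.
  subst y; case: (connect_first_step yv) => [->|[w a_w wv]]; first by rewrite eqxx.
  apply/orP; right; apply: (mem_subV (y := xj)); first by rewrite !inE eq_sym.
  by apply: connect_trans wv; apply: connect1; rewrite -sib.
- case/orP => [/eqP ->|]; first by apply: (mem_subV (y := xi)); rewrite ?inE.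
  by rewrite inE => /existsP [y /andP [_ yv]]; apply: (mem_subV (y := y)); rewrite ?inE.
Qed.

Lemma source_notin_subV xi :
  injective e -> indeg a (e xi) = 0 -> e xi \notin subV a e [set~ xi].
Proof.
move=> inj_e xi_src; apply/negP; rewrite inE => /existsP [y /andP [yY /connect_indeg0]].
by move=> /(_ xi_src) /inj_e yi; move: yY; rewrite yi !inE eqxx.
Qed.

End SubPedigree.

Section IsoFixing.

Variables (X VT VU : finType) (aT : rel VT) (eT : X -> VT) (aU : rel VU) (eU : X -> VU).

Lemma iso_fixing_siblings (Y : {set X}) xi xj :
  iso_fixing aT eT aU eU Y -> xi \in Y -> xj \in Y ->
  aT (eT xi) =1 aT (eT xj) -> aU (eU xi) =1 aU (eU xj).
Proof.
move=> [f [_ imf arcf fixf]] xiY xjY sibT w.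
have [wU|wU] := boolP (w \in subV aU eU Y).
  move: wU; rewrite -imf => /imsetP [t tT ->].
  by rewrite -!fixf // -!arcf //; apply: mem_subV (connect0 _ _).
by apply/idP/idP => arc; case/negP: wU; apply: arc_subV arc.
Qed.

Lemma iso_fixing_add_sibling xi xj :
  injective eT -> injective eU -> indeg aT (eT xi) = 0 -> indeg aU (eU xi) = 0 ->
  xi != xj -> aT (eT xi) =1 aT (eT xj) -> aU (eU xi) =1 aU (eU xj) ->
  iso_fixing aT eT aU eU [set~ xi] -> iso_fixing aT eT aU eU setT.
Proof.
move=> injT injU srcT srcU xi_xj sibT sibU [f [injf imf arcf fixf]].
have xi_outT := source_notin_subV injT srcT.
have xi_outU := source_notin_subV injU srcU.
have xjY : xj \in [set~ xi] by rewrite !inE eq_sym.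
have f_in v : v \in subV aT eT [set~ xi] -> f v \in subV aU eU [set~ xi].
  by move=> vY; rewrite -imf; apply: imset_f.
pose g v := if v == eT xi then eU xi else f v.
exists g; rewrite (subV_setT_sibling xi_xj sibT) (subV_setT_sibling xi_xj sibU).
split => [u v|||y _].
- rewrite !in_setU1 /g.
  have [->|u_xi] := eqVneq u (eT xi); have [->|v_xi] := eqVneq v (eT xi) => //= uY vY.
  + by move=> E; move: (f_in _ vY); rewrite -E (negbTE xi_outU).
  + by move=> E; move: (f_in _ uY); rewrite E (negbTE xi_outU).
  + exact: injf.
- rewrite imsetU1 /g eqxx -imf; congr (_ |: _); apply: eq_in_imset => v vY.
  by case: eqP vY xi_outT => // -> ->.
- move=> u v; rewrite !in_setU1 /g.
  have [->|u_xi] := eqVneq u (eT xi); have [->|v_xi] := eqVneq v (eT xi) => /= uY vY.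
  + by rewrite !indeg0_arc.
  + by rewrite sibT sibU -(fixf _ xjY) arcf //; apply: mem_subV (connect0 _ _).
  + by rewrite !indeg0_arc.
  + exact: arcf.
- rewrite /g (inj_eq injT); have [->//|y_xi] := eqVneq y xi.
  by rewrite fixf // !inE.
Qed.

End IsoFixing.

Lemma exists_third (X : finType) (xi xj : X) :
  2 < #|X| -> exists xk, (xk != xi) && (xk != xj).
Proof.
move=> X_gt2; have : 0 < #|~: [set xi; xj]|.
  by rewrite cardsCs setCK; have := cards2 xi xj; lia.
by rewrite card_gt0 => /set0Pn [xk]; rewrite !inE negb_or; exists xk.
Qed.

Theorem mainTheorem4 (X : finType) (n d : nat) (VT : finType) (aT : rel VT)
  (eT : X -> VT) (gT : VT -> nat) :
  2 < n -> #|X| = n -> 1 <= d -> is_dgp aT eT gT d ->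
  (exists xi xj : X, xi != xj /\
     [set v | aT (eT xi) v] = [set v | aT (eT xj) v]) ->
  forall (VU : finType) (aU : rel VU) (eU : X -> VU) (gU : VU -> nat) (dU : nat),
    is_dgp aU eU gU dU ->
    (forall Y : {set X}, #|Y| = n.-1 -> iso_fixing aT eT aU eU Y) ->
    iso_fixing aT eT aU eU setT.
Proof.
move=> + cardX _; rewrite -cardX => X_gt2 [[injT _ srcT _] _ _ _ _]
  [xi [xj [xi_xj parentsT]]] VU aU eU gU dU [[injU _ srcU _] _ _ _ _] iso_delete1.
have sibT : aT (eT xi) =1 aT (eT xj).
  by move=> v; move/setP: parentsT => /(_ v); rewrite !inE.
have iso_avoid x : iso_fixing aT eT aU eU [set~ x].
  by apply: iso_delete1; rewrite cardsC1.
have [xk /andP [xk_xi xk_xj]] := exists_third xi xj X_gt2.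
have sibU : aU (eU xi) =1 aU (eU xj).
  by apply: (iso_fixing_siblings (iso_avoid xk) _ _ sibT); rewrite !inE eq_sym.
exact: iso_fixing_add_sibling injT injU (srcT xi) (srcU xi) xi_xj sibT sibU
  (iso_avoid xi).
Qed.
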